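(* For every integer $n$, $$F_n^3=\frac{F_{n-1}F_{n+1}F_{n+2}+F_{n-2}F_{n-1}F_{n+1}}{6}+\frac{F_{n-2}F_{n+1}F_{n+2}-F_{n-2}F_{n-1}F_{n+2}}{2}.$$
   Context: $F_n$ denotes the Fibonacci numbers: $F_0=0,F_1=1$, $F_{n+1}=F_n+F_{n-1}$ for all $n\in\mathbb{Z}$ (so $F_{-m}=(-1)^{m+1}F_m$). *)

From Stdlib Require Import ZArith Reals.
Open Scope Z_scope.

Fixpoint fib_nat (n : nat) : Z :=
  match n with
  | O => 0
  | S O => 1
  | S ((S m) as p) => fib_nat p + fib_nat m
  end.

(* Extension to all integers: F_{-m} = (-1)^(m+1) F_m, which is the unique
   extension satisfying F_{n+1} = F_n + F_{n-1} for all n in Z. *)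
Definition fib (n : Z) : Z :=
  if 0 <=? n then fib_nat (Z.to_nat n)
  else (-1) ^ (- n + 1) * fib_nat (Z.to_nat (- n)).

(* Writing a = F_(n-2) and b = F_(n-1), the recurrence gives
   F_n = a + b, F_(n+1) = a + 2b and F_(n+2) = 2a + 3b, and after this
   substitution both sides are the same cubic polynomial in a and b. *)

From Stdlib Require Import ZArith Reals Lia.
Open Scope R_scope.

Lemma fib_of_nat (k : nat) : fib (Z.of_nat k) = fib_nat k.
Proof.
  unfold fib. rewrite Nat2Z.id.
  destruct (Z.leb_spec 0 (Z.of_nat k)); [reflexivity | lia].
Qed.

Lemma fib_opp_of_nat (k : nat) :
  fib (- Z.of_nat k) = ((-1) ^ (Z.of_nat k + 1) * fib_nat k)%Z.
Proof.
  destruct k as [|k]; [reflexivity |].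
  unfold fib. destruct (Z.leb_spec 0 (- Z.of_nat (S k))); [lia |].
  rewrite Z.opp_involutive, Nat2Z.id. reflexivity.
Qed.

Lemma fib_rec (n : Z) : fib (n + 2) = (fib (n + 1) + fib n)%Z.
Proof.
  destruct (Z.le_gt_cases 0 n) as [Hn | Hn].
  -
    destruct (Z_of_nat_complete n Hn) as [k ->].
    replace (Z.of_nat k + 2)%Z with (Z.of_nat (S (S k))) by lia.
    replace (Z.of_nat k + 1)%Z with (Z.of_nat (S k)) by lia.
    rewrite !fib_of_nat. destruct k; reflexivity.
  - destruct (Z.eq_dec n (-1)) as [-> | Hn1]; [reflexivity |].
    destruct (Z_of_nat_complete (- n - 2)) as [k Ek]; [lia |].
    replace n with (- Z.of_nat (S (S k)))%Z by lia.
    replace (- Z.of_nat (S (S k)) + 2)%Z with (- Z.of_nat k)%Z by lia.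
    replace (- Z.of_nat (S (S k)) + 1)%Z with (- Z.of_nat (S k))%Z by lia.
    rewrite !fib_opp_of_nat.
    change (fib_nat (S (S k))) with (fib_nat (S k) + fib_nat k)%Z.
    replace (Z.of_nat (S (S k)) + 1)%Z with (Z.succ (Z.succ (Z.of_nat k + 1))) by lia.
    replace (Z.of_nat (S k) + 1)%Z with (Z.succ (Z.of_nat k + 1)) by lia.
    rewrite !Z.pow_succ_r by lia. ring.
Qed.

Lemma cube_of_fibonacci_like (u0 u1 u2 u3 u4 : R) :
  u2 = u1 + u0 -> u3 = u2 + u1 -> u4 = u3 + u2 ->
  u2 ^ 3 = (u1 * u3 * u4 + u0 * u1 * u3) / 6
           + (u0 * u3 * u4 - u0 * u1 * u4) / 2.
Proof. intros -> -> ->. field. Qed.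

Theorem proposition2p5 : forall n : Z,
  (IZR (fib n)) ^ 3 =
    (IZR (fib (n - 1)) * IZR (fib (n + 1)) * IZR (fib (n + 2))
     + IZR (fib (n - 2)) * IZR (fib (n - 1)) * IZR (fib (n + 1))) / 6
  + (IZR (fib (n - 2)) * IZR (fib (n + 1)) * IZR (fib (n + 2))
     - IZR (fib (n - 2)) * IZR (fib (n - 1)) * IZR (fib (n + 2))) / 2.
Proof.
  intro n.
  apply cube_of_fibonacci_like; rewrite <- plus_IZR; f_equal.
  - replace n with (n - 2 + 2)%Z at 1 by ring.
    rewrite fib_rec. f_equal. f_equal. ring.
  - replace (n + 1)%Z with (n - 1 + 2)%Z by ring.
    rewrite fib_rec. f_equal. f_equal. ring.
  - exact (fib_rec n).
Qed.
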